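(* Let $X$ be a hyperbolic approximation of $Z$. Any two vertices $v,v'\in V$ can be connected in $X$ by a geodesic which contains at most one horizontal edge; if it contains such an edge, this edge lies on the lowest level attained by the geodesic.
   Context: Hyperbolic approximation: let $(Z,d)$ be a bounded metric space with at least two points and fix $0<r\le1/6$. Let $k_0$ be the largest integer with $\operatorname{diam}Z<r^{k_0}$. For each integer $k\ge k_0$ choose a maximal $r^k$-separated subset $V_k\subset Z$. Vertex set $V=\bigsqcup_{k\ge k_0}V_k$ (disjoint union), level $\ell(v)=k$ for $v\in V_k$, ball $B(v)=\{z:d(z,v)<2r^k\}$ with closure $\overline B(v)$. Edges: $v,v'$ of equal level with $\overline B(v)\cap\overline B(v')\neq\emptyset$ (horizontal edges), or levels differing by one with the ball of the higher-level vertex contained in the ball of the lower-level one (radial edges). Path metric with unit edges, denoted $|vv'|$. *)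

From mathcomp Require Import all_boot all_order all_algebra.
From mathcomp Require Import boolp classical_sets reals.
Set Implicit Arguments. Unset Strict Implicit. Unset Printing Implicit Defensive.
Import Order.TTheory GRing.Theory Num.Theory.
Local Open Scope ring_scope.
Local Open Scope classical_set_scope.

Definition is_metric (R : realType) (Z : Type) (d : Z -> Z -> R) : Prop :=
  (forall x y, 0 <= d x y) /\ (forall x y, d x y = 0 <-> x = y) /\
  (forall x y, d x y = d y x) /\ (forall x y z, d x z <= d x y + d y z).

Definition bounded_metric (R : realType) (Z : Type) (d : Z -> Z -> R) : Prop :=
  exists M : R, forall x y, d x y <= M.

Definition diam (R : realType) (Z : Type) (d : Z -> Z -> R) : R :=
  sup [set d x y | x in [set: Z] & y in [set: Z]].

Definition separated (R : realType) (Z : Type) (d : Z -> Z -> R) (e : R)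
  (A : set Z) : Prop :=
  forall x y, A x -> A y -> x <> y -> e <= d x y.

Definition maximal_separated (R : realType) (Z : Type) (d : Z -> Z -> R)
  (e : R) (A : set Z) : Prop :=
  separated d e A /\ (forall B, A `<=` B -> separated d e B -> B `<=` A).

Definition mclosure (R : realType) (Z : Type) (d : Z -> Z -> R) (A : set Z)
  : set Z :=
  [set z | forall eps : R, 0 < eps -> exists2 w, A w & d z w < eps].

(* vertices of the hyperbolic approximation: a level k and a point of V_k
   (the tag k makes V the disjoint union of the V_k) *)
Record vertex (Z : Type) := Vx { lev : int; pt : Z }.

Definition is_vertex (Z : Type) (k0 : int) (V : int -> set Z) (v : vertex Z)
  : Prop := (k0 <= lev v)%R /\ V (lev v) (pt v).

Definition vball (R : realType) (Z : Type) (d : Z -> Z -> R) (r : R)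
  (v : vertex Z) : set Z :=
  [set z | d z (pt v) < 2 * r ^ (lev v)].

Definition horiz_edge (R : realType) (Z : Type) (d : Z -> Z -> R) (r : R)
  (k0 : int) (V : int -> set Z) (v w : vertex Z) : Prop :=
  is_vertex k0 V v /\ is_vertex k0 V w /\ v <> w /\ lev v = lev w /\
  exists z, mclosure d (vball d r v) z /\ mclosure d (vball d r w) z.

Definition radial_edge (R : realType) (Z : Type) (d : Z -> Z -> R) (r : R)
  (k0 : int) (V : int -> set Z) (v w : vertex Z) : Prop :=
  is_vertex k0 V v /\ is_vertex k0 V w /\
  ((lev w = lev v + 1 /\ vball d r w `<=` vball d r v) \/
   (lev v = lev w + 1 /\ vball d r v `<=` vball d r w)).

Definition adj (R : realType) (Z : Type) (d : Z -> Z -> R) (r : R)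
  (k0 : int) (V : int -> set Z) (v w : vertex Z) : Prop :=
  horiz_edge d r k0 V v w \/ radial_edge d r k0 V v w.

Definition is_walk (Z : Type) (e : vertex Z -> vertex Z -> Prop) (n : nat)
  (f : nat -> vertex Z) (v w : vertex Z) : Prop :=
  f 0%N = v /\ f n = w /\ forall i, (i < n)%N -> e (f i) (f i.+1).

(* geodesic for the unit-edge path metric: a path of minimal length *)
Definition is_geodesic (Z : Type) (e : vertex Z -> vertex Z -> Prop) (n : nat)
  (f : nat -> vertex Z) (v w : vertex Z) : Prop :=
  is_walk e n f v w /\ forall m g, is_walk e m g v w -> (n <= m)%N.

From mathcomp Require Import all_boot all_order all_algebra.
From mathcomp Require Import boolp classical_sets reals.
From mathcomp Require Import zify lra.
Import Order.TTheory GRing.Theory Num.Theory.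

Set Implicit Arguments.
Unset Strict Implicit.

(* Among the geodesics from v to v', take one whose sum of levels is minimal.
   At a weak peak x, y, z of it (lev x <= lev y >= lev z), the vertex y can be
   replaced by a vertex one level lower: the parent of y, of x or of z, whose
   ball contains the relevant balls because 6 r^k <= r^(k-1).  The only
   obstructions are x = z or x adjacent to z, and both would shorten the
   geodesic.  So the levels along a minimal geodesic have no weak peak: they
   decrease strictly, make at most one horizontal step, then increase
   strictly. *)

Lemma exists_argmin (T : Type) (P : T -> Prop) (mu : T -> nat) :
  (exists x, P x) -> exists2 x, P x & forall y, P y -> (mu x <= mu y)%N.
Proof.
case=> x0 Px0.
have exm : exists m, `[< exists2 x, P x & mu x = m >].
  by exists (mu x0); apply/asboolP; exists x0.
case: (ex_minnP exm) => m /asboolP [x Px <-] min_m.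
by exists x => // y Py; apply/min_m/asboolP; exists y.
Qed.

Section Walks.
Variables (Z : Type) (e : vertex Z -> vertex Z -> Prop).

Lemma walk_cons n f x v w : e x v -> is_walk e n f v w ->
  is_walk e n.+1 (fun i => if i is j.+1 then f j else x) x w.
Proof.
move=> exv [f0 [fn fs]]; do 2 split=> //.
by case=> [|i] /= lt_in; [rewrite f0 | apply: fs].
Qed.

Lemma walk_snoc n f v w x : is_walk e n f v w -> e w x ->
  is_walk e n.+1 (fun i => if (i <= n)%N then f i else x) v x.
Proof.
move=> [f0 [fn fs]] ewx; split=> //; split=> [|i]; first by rewrite ltnn.
by rewrite ltnS; case: ltngtP => // [lt_in _ | -> _]; [apply: fs | rewrite fn].
Qed.

Lemma walk_splice n f v w a m : is_walk e n f v w -> (a + m <= n)%N ->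
  ((a + m < n)%N -> e (f a) (f (a + m).+1)) -> (a + m = n -> f a = w) ->
  is_walk e (n - m) (fun i => if (i <= a)%N then f i else f (i + m)) v w.
Proof.
move=> [f0 [fn fs]] le_amn edge_a end_a; split=> //; split.
  case: (leqP (n - m) a) => [le_na | lt_an]; last by rewrite subnK ?fn //; lia.
  have -> : (n - m = a)%N by lia.
  by apply: end_a; lia.
move=> i lt_i; case: (ltngtP i a) => [lt_ia | lt_ai | eq_ia].
- by apply: fs; lia.
- by rewrite addSn; apply: fs; lia.
- by rewrite eq_ia addSn; apply: edge_a; lia.
Qed.

Lemma walk_replace n f v w a p : is_walk e n f v w -> (a.+2 <= n)%N ->
  e (f a) p -> e p (f a.+2) ->
  is_walk e n (fun i => if i == a.+1 then p else f i) v w.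
Proof.
move=> [f0 [fn fs]] le_an ap pa; split=> //; split.
  by rewrite ifN_eq // gtn_eqF.
move=> i lt_in; rewrite eqSS; case: (eqVneq i a.+1) => [-> | ne_i].
  by rewrite gtn_eqF.
by case: (eqVneq i a) => [-> | _] //; apply: fs.
Qed.

Lemma exists_geodesic n f v w : is_walk e n f v w ->
  exists m g, is_geodesic e m g v w.
Proof.
move=> walk_f.
have [[m g] walk_g min_m] := exists_argmin
  (P := fun mg : nat * (nat -> vertex Z) => is_walk e mg.1 mg.2 v w) fst
  (ex_intro _ (n, f) walk_f).
by exists m, g; split=> // k h walk_h; apply: (min_m (k, h)).
Qed.

Lemma geodesic_no_shortcut n f v w a : is_geodesic e n f v w -> (a.+2 <= n)%N ->
  f a <> f a.+2 /\ ~ e (f a) (f a.+2).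
Proof.
move=> [walk_f min_n] lt_an; have [_ [fn fs]] := walk_f; split=> [loop | short].
  have /min_n : is_walk e (n - 2) (fun i => if (i <= a)%N then f i else f (i + 2)) v w.
    apply: (walk_splice (a := a) (m := 2) walk_f); rewrite addn2 //.
      by rewrite loop; apply: fs.
    by move=> eq_n; rewrite loop eq_n.
  lia.
have /min_n : is_walk e (n - 1) (fun i => if (i <= a)%N then f i else f (i + 1)) v w.
  apply: (walk_splice (a := a) (m := 1) walk_f); rewrite addn1.
  - exact: ltnW.
  - by move=> _.
  - by move=> eq_n; rewrite eq_n ltnn in lt_an.
lia.
Qed.

Definition walk_weight (h : vertex Z -> nat) n (f : nat -> vertex Z) :=
  (\sum_(i < n.+1) h (f i))%N.

Lemma walk_weight_replace (h : vertex Z -> nat) n f a p : (a < n)%N ->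
  (h p < h (f a.+1))%N ->
  (walk_weight h n (fun i => if i == a.+1 then p else f i) < walk_weight h n f)%N.
Proof.
move=> lt_an lt_p; have ord_a : (a.+1 < n.+1)%N by [].
rewrite /walk_weight (bigD1 (Ordinal ord_a)) //= eqxx.
rewrite [X in (_ < X)%N](bigD1 (Ordinal ord_a)) //=.
rewrite (eq_bigr (fun i : 'I_n.+1 => h (f i))) ?ltn_add2r // => i ne_ia.
by rewrite ifN_eq // -(inj_eq val_inj).
Qed.

End Walks.

Section WeakPeakFree.
Variables (disp : Order.disp_t) (T : orderType disp) (h : nat -> T) (n : nat).
Hypothesis rises : forall a, (a.+2 <= n)%N -> (h a <= h a.+1)%O -> (h a.+1 < h a.+2)%O.

Lemma rises_after a b : (a < b < n)%N -> (h a <= h a.+1)%O -> (h b < h b.+1)%O.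
Proof.
elim: b => // b IH /andP[lt_ab lt_bn] up_a; apply: rises => //.
rewrite ltnS leq_eqVlt in lt_ab; case/predU1P: lt_ab => [<- // | lt_ab].
by apply/ltW/(IH _ up_a); rewrite lt_ab ltnW.
Qed.

Lemma flat_step_unique i j : (i < n)%N -> (j < n)%N ->
  h i = h i.+1 -> h j = h j.+1 -> i = j.
Proof.
wlog le_ij : i j / (i <= j)%N => [sym | lt_in lt_jn flat_i flat_j].
  by case/orP: (leq_total i j) => ?; [| symmetry]; apply: sym.
case: (ltngtP i j) le_ij => // lt_ij _.
have := rises_after (a := i) (b := j).
by rewrite lt_ij lt_jn flat_i flat_j ltxx lexx => /(_ isT isT).
Qed.

Lemma flat_step_min i j : (i < n)%N -> h i = h i.+1 -> (j <= n)%N -> (h i <= h j)%O.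
Proof.
move=> lt_in flat_i le_jn; case: (leqP j i) => [le_ji | lt_ij].
  have down a : (a < i)%N -> (h a.+1 <= h a)%O.
    move=> lt_ai; rewrite leNgt; apply/negP => /ltW up_a.
    have := rises_after (a := a) (b := i).
    by rewrite flat_i ltxx lt_ai lt_in => /(_ isT up_a).
  have convex :
      {in [pred k | (k <= i)%N] &, forall a b k, (a < k < b)%N -> (k <= i)%N}.
    by move=> a b _ le_bi k /andP[_ /ltnW/leq_trans]; apply.
  exact: (homo_leq_in (r := fun x y => (y <= x)%O) (@lexx _ T)
    (fun _ _ _ le_yx le_zy => le_trans le_zy le_yx) convex (fun a _ => down a)
    le_ji (leqnn i) le_ji).
have step a : (i <= a < n)%N -> (h a <= h a.+1)%O.
  case/andP; case: (ltngtP i a) => // [lt_ia _ lt_an | <- _ _]; last by rewrite flat_i.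
  by apply/ltW/(rises_after (a := i)); rewrite ?lt_ia ?lt_an -?flat_i.
have convex : {in [pred k | (i <= k <= n)%N] &,
    forall a b k, (a < k < b)%N -> (i <= k <= n)%N}.
  move=> a b /andP[le_ia _] /andP[_ le_bn] k /andP[lt_ak lt_kb].
  by rewrite (leq_trans le_ia (ltnW lt_ak)) (leq_trans (ltnW lt_kb) le_bn).
apply: (homo_leq_in (@lexx _ T) (fun _ _ _ => @le_trans _ T _ _ _) convex
  _ _ _ (ltnW lt_ij)).
- by move=> a /andP[le_ia _] /andP[_ lt_an]; apply: step; rewrite le_ia.
- by rewrite inE leqnn ltnW.
- by rewrite inE (ltnW lt_ij).
Qed.

End WeakPeakFree.

Local Open Scope ring_scope.
Local Open Scope classical_set_scope.

Section Metric.
Variables (R : realType) (Z : Type) (d : Z -> Z -> R).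
Hypothesis metric_d : is_metric d.

Lemma metric_refl x : d x x = 0.
Proof. by case: metric_d => _ [/(_ x x) [_ ->]]. Qed.

Lemma metric_sym x y : d x y = d y x.
Proof. by case: metric_d => _ [_ []]. Qed.

Lemma metric_triangle x y z : d x z <= d x y + d y z.
Proof. by case: metric_d => _ [_ [_]]. Qed.

Lemma le_diam x y : bounded_metric d -> d x y <= diam d.
Proof.
case=> M le_M; apply: sup_upper_bound; last by exists x => //; exists y.
split; first by exists (d x y), x => //; exists y.
by exists M => _ [a _ [b _ <-]].
Qed.

Lemma maximal_separated_net e A x : 0 < e -> maximal_separated d e A ->
  exists2 w, A w & d x w < e.
Proof.
move=> e_gt0 [sepA maxA]; apply: contrapT => no_near.
have far w : A w -> e <= d x w.
  by move=> Aw; rewrite leNgt; apply/negP => near; apply: no_near; exists w.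
have : (A `|` [set x]) `<=` A.
  apply: maxA => [w Aw | a b [Aa|->] [Ab|->] ne_ab //]; first by left.
  - exact: sepA.
  - by rewrite metric_sym; apply: far.
  - exact: far.
move=> /(_ x (or_intror erefl)) /far; rewrite metric_refl.
by rewrite leNgt e_gt0.
Qed.

Lemma mclosure_sub (A B : set Z) : A `<=` B -> mclosure d A `<=` mclosure d B.
Proof.
by move=> sAB z clz eps eps_gt0; have [w /sAB Bw ?] := clz eps eps_gt0; exists w.
Qed.

Lemma sub_mclosure (A : set Z) : A `<=` mclosure d A.
Proof. by move=> z Az eps eps_gt0; exists z; rewrite ?metric_refl. Qed.

End Metric.

Section HyperbolicApproximation.
Variables (R : realType) (Z : Type) (d : Z -> Z -> R) (r : R) (k0 : int)
  (V : int -> set Z).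
Hypotheses (metric_d : is_metric d) (bounded_d : bounded_metric d)
  (r_gt0 : 0 < r) (r_le : r <= 6^-1) (diam_lt : diam d < r ^ k0)
  (sep_V : forall k : int, k0 <= k -> maximal_separated d (r ^ k) (V k)).

Local Notation isv := (is_vertex k0 V).
Local Notation ball := (vball d r).
Local Notation adjv := (adj d r k0 V).
Local Notation horiz := (horiz_edge d r k0 V).

Lemma six_exprz_le (k : int) : 6 * r ^ k <= r ^ (k - 1).
Proof.
have -> : r ^ k = r ^ (k - 1) * r.
  by rewrite -[r in _ * r]expr1z -expfzDr ?gt_eqF // subrK.
have : 6 * r <= 1 by move: r_le; lra.
by have := exprz_gt0 (k - 1) r_gt0; nra.
Qed.

Lemma vball_sub x p : d (pt x) (pt p) + 2 * r ^ lev x <= 2 * r ^ lev p ->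
  ball x `<=` ball p.
Proof.
move=> le_xp z; rewrite /vball /=.
by have := metric_triangle metric_d z (pt x) (pt p); lra.
Qed.

Lemma vball_center x : ball x (pt x).
Proof. by rewrite /vball /= metric_refl //; have := exprz_gt0 (lev x) r_gt0; lra. Qed.

Lemma mclosure_vball_dist x c : mclosure d (ball x) c -> d c (pt x) <= 2 * r ^ lev x.
Proof.
move=> clc; apply/ler_addgt0Pr => eps eps_gt0.
have [w] := clc eps eps_gt0; rewrite /vball /= => xw cw.
by have := metric_triangle metric_d c w (pt x); lra.
Qed.

Lemma horiz_edge_dist x y : horiz x y ->
  d (pt x) (pt y) <= 2 * r ^ lev x + 2 * r ^ lev y.
Proof.
move=> [_ [_ [_ [_ [c [cx cy]]]]]].
have := mclosure_vball_dist cx; have := mclosure_vball_dist cy.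
have := metric_triangle metric_d (pt x) c (pt y).
by rewrite (metric_sym metric_d (pt x) c); lra.
Qed.

Lemma exists_parent u : isv u -> k0 < lev u -> exists p,
  [/\ isv p, lev p = lev u - 1, d (pt u) (pt p) < r ^ lev p & ball u `<=` ball p].
Proof.
move=> _ lt_k0u; have le_k0 : k0 <= lev u - 1 by lia.
have [w Vw near_w] :=
  maximal_separated_net metric_d (pt u) (exprz_gt0 _ r_gt0) (sep_V le_k0).
exists (Vx (lev u - 1) w); split => //; apply: vball_sub => /=.
by have := six_exprz_le (lev u); have := exprz_gt0 (lev u) r_gt0; lra.
Qed.

Lemma vertex_k0_unique x y : isv x -> isv y -> lev x = k0 -> lev y = k0 -> x = y.
Proof.
case: x y => [lx px] [ly py] [_ V_px] [_ V_py] /= lx_k0 ly_k0; subst lx ly; congr Vx.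
apply: contrapT => ne_xy; have [sepV _] := sep_V (lexx k0).
have := le_diam px py bounded_d.
by have := sepV _ _ V_px V_py ne_xy; move: diam_lt; lra.
Qed.

Lemma horiz_edge_sym x y : horiz x y -> horiz y x.
Proof.
move=> [vx [vy [ne_xy [eq_lev [c [cx cy]]]]]].
by do 2 split=> //; split; [exact: nesym | split; [exact: esym | exists c]].
Qed.

Lemma adj_sym x y : adjv x y -> adjv y x.
Proof.
case=> [/horiz_edge_sym | [vx [vy up_down]]]; [by left | right].
by do 2 split => //; case: up_down; [right | left].
Qed.

Lemma adj_vertex x y : adjv x y -> isv x /\ isv y.
Proof. by case=> [[? [? _]] | [? [? _]]]. Qed.

Lemma adj_radial x p : isv x -> isv p -> lev x = lev p + 1 -> ball x `<=` ball p ->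
  adjv x p.
Proof. by move=> vx vp lev_xp sub_xp; right; do 2 split=> //; right. Qed.

Lemma adj_horiz x y : isv x -> isv y -> x <> y -> lev x = lev y ->
  (exists c, mclosure d (ball x) c /\ mclosure d (ball y) c) -> adjv x y.
Proof. by move=> vx vy ne_xy lev_xy cl; left; do 2 split=> //; split. Qed.

Lemma adj_le_lev x y : adjv x y -> lev x <= lev y ->
  horiz x y \/ lev y = lev x + 1 /\ ball y `<=` ball x.
Proof. by case=> [? | [_ [_ [[lev_xy ?] | [lev_xy ?]]]]] le_xy; [left | right | lia]. Qed.

Lemma adj_connected v w : isv v -> isv w -> exists n f, is_walk adjv n f v w.
Proof.
move=> vv vw; have [t def_t] : exists t, t = (absz (lev v - k0) + absz (lev w - k0))%N.
  by eexists.
elim/ltn_ind: t v w vv vw def_t => t IH v w vv vw def_t.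
case: (ltP k0 (lev v)) => [lt_k0v | le_vk0].
  have [p [vp lev_p _ sub_vp]] := exists_parent vv lt_k0v.
  have [|n [f walk_f]] := IH _ _ p w vp vw erefl; first by case: vp; lia.
  by exists n.+1, (fun i => if i is j.+1 then f j else v); apply: walk_cons walk_f;
    apply: adj_radial => //; lia.
case: (ltP k0 (lev w)) => [lt_k0w | le_wk0].
  have [p [vp lev_p _ sub_wp]] := exists_parent vw lt_k0w.
  have [|n [f walk_f]] := IH _ _ v p vv vp erefl; first by case: vv; lia.
  have pw : adjv p w by apply/adj_sym/adj_radial => //; lia.
  by exists n.+1, (fun i => if (i <= n)%N then f i else w); apply: walk_snoc walk_f pw.
exists 0%N, (fun=> v); do 2 split=> //.
by apply: vertex_k0_unique => //; [case: vv | case: vw]; lia.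
Qed.

Definition peak_bypass (x y z : vertex Z) : Prop :=
  x = z \/ adjv x z \/ exists p, [/\ lev p = lev y - 1, adjv x p & adjv p z].

Lemma peak_bypass_sym x y z : peak_bypass x y z -> peak_bypass z y x.
Proof.
case=> [-> | [/adj_sym zx | [p [lev_p xp pz]]]]; [by left | by right; left |].
by right; right; exists p; split=> //; apply: adj_sym.
Qed.

Lemma bypass_horiz_horiz x y z : horiz x y -> horiz z y -> peak_bypass x y z.
Proof.
move=> xy zy; have [vx [vy [ne_xy [lev_xy _]]]] := xy; have [vz [_ [_ [lev_zy _]]]] := zy.
have lt_k0y : k0 < lev y.
  have [le_k0y _] := vy; rewrite lt_neqAle le_k0y andbT; apply/eqP => lev_y.
  by apply: ne_xy; apply: vertex_k0_unique => //; rewrite lev_xy.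
have [p [vp lev_p near_p _]] := exists_parent vy lt_k0y.
have sub_p w : horiz w y -> ball w `<=` ball p.
  move=> wy; apply: vball_sub; have := horiz_edge_dist wy; have [_ [_ [_ [-> _]]]] := wy.
  have := metric_triangle metric_d (pt w) (pt y) (pt p); have := six_exprz_le (lev y).
  by move: near_p; rewrite lev_p; lra.
right; right; exists p; split=> //.
  by apply: adj_radial (sub_p x xy) => //; lia.
by apply/adj_sym; apply: adj_radial (sub_p z zy) => //; lia.
Qed.

Lemma bypass_horiz_radial x y z : horiz x y -> isv z ->
  lev y = lev z + 1 -> ball y `<=` ball z -> peak_bypass x y z.
Proof.
move=> xy vz lev_yz sub_yz; have [vx [vy [_ [lev_xy [c [cx cy]]]]]] := xy.
have lt_k0x : k0 < lev x by case: vz; lia.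
have [p [vp lev_p _ sub_xp]] := exists_parent vx lt_k0x.
have xp : adjv x p by apply: adj_radial => //; lia.
case: (pselect (p = z)) => [<- | ne_pz]; first by right; left.
right; right; exists p; split => //; first lia.
apply: adj_horiz => //; first lia.
by exists c; split; [apply: mclosure_sub sub_xp _ cx | apply: mclosure_sub sub_yz _ cy].
Qed.

Lemma bypass_radial_radial x y z : isv x -> isv z ->
  lev y = lev x + 1 -> ball y `<=` ball x -> lev y = lev z + 1 -> ball y `<=` ball z ->
  peak_bypass x y z.
Proof.
move=> vx vz lev_yx sub_yx lev_yz sub_yz.
case: (pselect (x = z)) => [| ne_xz]; [by left | right; left].
apply: adj_horiz => //; first lia.
exists (pt y); split; apply: (sub_mclosure metric_d);
  [apply: sub_yx | apply: sub_yz]; exact: vball_center.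
Qed.

Lemma bypass_weak_peak x y z : adjv x y -> adjv y z ->
  lev x <= lev y -> lev z <= lev y -> peak_bypass x y z.
Proof.
move=> xy yz le_xy le_zy; have [vx _] := adj_vertex xy; have [_ vz] := adj_vertex yz.
case: (adj_le_lev xy le_xy) (adj_le_lev (adj_sym yz) le_zy)
  => [hxy | [lev_yx sub_yx]] [hzy | [lev_yz sub_yz]].
- exact: bypass_horiz_horiz.
- exact: bypass_horiz_radial.
- exact/peak_bypass_sym/bypass_horiz_radial.
- exact: bypass_radial_radial.
Qed.

End HyperbolicApproximation.

Theorem mainTheorem8 (R : realType) (Z : Type) (d : Z -> Z -> R)
  (r : R) (k0 : int) (V : int -> set Z) :
  is_metric d -> bounded_metric d -> (exists x y : Z, x <> y) ->
  0 < r -> r <= 6^-1 ->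
  diam d < r ^ k0 -> (forall k : int, diam d < r ^ k -> k <= k0) ->
  (forall k : int, k0 <= k -> maximal_separated d (r ^ k) (V k)) ->
  forall v v' : vertex Z, is_vertex k0 V v -> is_vertex k0 V v' ->
  exists (n : nat) (f : nat -> vertex Z),
    is_geodesic (adj d r k0 V) n f v v' /\
    (forall i j, (i < n)%N -> (j < n)%N ->
       horiz_edge d r k0 V (f i) (f i.+1) ->
       horiz_edge d r k0 V (f j) (f j.+1) -> i = j) /\
    (forall i, (i < n)%N -> horiz_edge d r k0 V (f i) (f i.+1) ->
       forall j, (j <= n)%N -> lev (f i) <= lev (f j)).
Proof.
move=> metric_d bounded_d _ r_gt0 r_le diam_lt _ sep_V v v' vv vv'.
have [n [f0 walk_f0]] := adj_connected metric_d bounded_d r_gt0 r_le diam_lt sep_V vv vv'.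
have [N [g [walk_g min_N]]] := exists_geodesic walk_f0.
have [f walk_f min_f] := exists_argmin (P := fun f => is_walk (adj d r k0 V) N f v v')
  (walk_weight (fun u => absz (lev u - k0)) N) (ex_intro _ g walk_g).
have geo_f : is_geodesic (adj d r k0 V) N f v v' by [].
have rises a : (a.+2 <= N)%N -> lev (f a) <= lev (f a.+1) -> lev (f a.+1) < lev (f a.+2).
  move=> aN le_a; rewrite ltNge; apply/negP => le_a2; have [_ [_ adj_f]] := walk_f.
  have [no_loop no_short] := geodesic_no_shortcut geo_f aN.
  have [// | [// | [p [lev_p xp pz]]]] := bypass_weak_peak metric_d bounded_d r_gt0 r_le
    diam_lt sep_V (adj_f a (ltnW aN)) (adj_f a.+1 aN) le_a le_a2.
  have [[le_k0p _] _] := adj_vertex pz.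
  have := min_f _ (walk_replace walk_f aN xp pz).
  by rewrite leqNgt walk_weight_replace //; lia.
have flat i : horiz_edge d r k0 V (f i) (f i.+1) -> lev (f i) = lev (f i.+1).
  by case=> [_ [_ [_ []]]].
exists N, f; split=> //; split.
  by move=> i j iN jN /flat fi /flat fj; apply: (flat_step_unique rises).
by move=> i iN /flat fi j jN; apply: (flat_step_min rises).
Qed.
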